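(* Let $a\in(0,1)$, $k\in(1,\infty)$ and $r,s\in(1,\infty)$. Then (1) $\pi_{rs}\le\sqrt{\pi_{r^2}\pi_{s^2}}\le\sqrt{\pi_r\pi_s}$; (2) $\pi_{r^as^{1-a}}\le a\,\pi_r+(1-a)\,\pi_s$; (3) if moreover $r\le s$, then $\left(\frac{\pi_s}{\pi_r}\right)^k\le\frac{\pi_{s^k}}{\pi_{r^k}}$.
   Context: For $p>1$, $\pi_p=\frac{2\pi}{p\sin(\pi/p)}$. *)

From Stdlib Require Import Reals.
Open Scope R_scope.

(* pi_p = 2 pi / (p sin(pi/p)), intended for p > 1. *)
Definition pi_p (p : R) : R := 2 * PI / (p * sin (PI / p)).

(* Let [H x = ln (pi_p (exp x))] ([log_pi_exp] below).  With [t = PI / exp x] one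
   finds [H' x = t cot t - 1]; since [t cot t] decreases on (0, PI) and is at most 1,
   [H] is convex and nonincreasing on (0, +oo).  Then (1) is convexity of [H] at the
   midpoint of [2 ln r] and [2 ln s] together with monotonicity, (2) is convexity of
   [H] followed by the weighted AM-GM inequality, and (3) compares the slopes of [H]
   on [ln r, ln s] and on [k ln r, k ln s]. *)
From Stdlib Require Import Reals Lra.
From Coquelicot Require Import Coquelicot.
Open Scope R_scope.

Definition slope (f : R -> R) (a b : R) : R := (f b - f a) / (b - a).

Section DerivativeOnHalfLine.
Variables (f df : R -> R) (lo : R).
Hypothesis f_derive : forall x, lo < x -> is_derive f x (df x).

Lemma mvt_above a b : lo < a < b ->
  exists c, a <= c <= b /\ f b - f a = df c * (b - a).
Proof.
  intros [Ha Hab].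
  destruct (MVT_gen f a b df) as [c [Hc E]].
  - intros x Hx. rewrite Rmin_left in Hx by lra. apply f_derive. lra.
  - intros x Hx. rewrite Rmin_left in Hx by lra.
    apply continuity_pt_filterlim, (ex_derive_continuous (K:=R_AbsRing) (V:=R_NormedModule)).
    eexists. apply f_derive. lra.
  - rewrite Rmin_left, Rmax_right in Hc by lra. now exists c.
Qed.

Hypothesis df_mono : forall x y, lo < x -> x <= y -> df x <= df y.

Lemma slope_le_slope a b c : lo < a < b -> b < c -> slope f a b <= slope f b c.
Proof.
  intros Hab Hbc.
  destruct (mvt_above a b Hab) as [c1 [Hc1 E1]].
  destruct (mvt_above b c ltac:(lra)) as [c2 [Hc2 E2]].
  unfold slope. rewrite E1, E2.
  replace (df c1 * (b - a) / (b - a)) with (df c1) by (field; lra).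
  replace (df c2 * (c - b) / (c - b)) with (df c2) by (field; lra).
  apply df_mono; lra.
Qed.

Lemma slope_outer_between a b c : lo < a < b -> b < c ->
  slope f a b <= slope f a c <= slope f b c.
Proof.
  intros Hab Hbc. pose proof (slope_le_slope a b c Hab Hbc) as Hle.
  (* the slope over [a, c] is a weighted mean of the two partial slopes *)
  assert (Hmean : slope f a c * (c - a) = (b - a) * slope f a b + (c - b) * slope f b c).
  { unfold slope. field. lra. }
  split; apply Rmult_le_reg_r with (c - a); nra.
Qed.

Lemma slope_monotone a b c d : lo < a -> a < b -> c < d -> a <= c -> b <= d ->
  slope f a b <= slope f c d.
Proof.
  intros Ha Hab Hcd Hac Hbd.
  assert (Habd : slope f a b <= slope f a d).
  { destruct (Req_dec b d) as [-> | Hbd']; [lra|].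
    apply (slope_outer_between a b d); lra. }
  assert (Hacd : slope f a d <= slope f c d).
  { destruct (Req_dec a c) as [-> | Hac']; [lra|].
    apply (slope_outer_between a c d); lra. }
  lra.
Qed.

Lemma convex_lt x y t : lo < x < y -> 0 < t < 1 ->
  f (t * x + (1 - t) * y) <= t * f x + (1 - t) * f y.
Proof.
  intros Hxy Ht. set (m := t * x + (1 - t) * y).
  assert (Hm : x < m < y) by (unfold m; split; nra).
  pose proof (slope_le_slope x m y ltac:(lra) ltac:(lra)) as Hle.
  assert (E : t * f x + (1 - t) * f y - f m
              = t * (1 - t) * (y - x) * (slope f m y - slope f x m)).
  { unfold slope, m. field. split; nra. }
  assert (0 <= t * (1 - t) * (y - x) * (slope f m y - slope f x m)).
  { apply Rmult_le_pos; [|lra]. apply Rmult_le_pos; nra. }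
  lra.
Qed.

Lemma convex x y t : lo < x -> lo < y -> 0 < t < 1 ->
  f (t * x + (1 - t) * y) <= t * f x + (1 - t) * f y.
Proof.
  intros Hx Hy Ht.
  destruct (Rtotal_order x y) as [Hxy | [<- | Hxy]].
  - now apply convex_lt.
  - replace (t * x + (1 - t) * x) with x by ring. lra.
  - replace (t * x + (1 - t) * y) with ((1 - t) * y + (1 - (1 - t)) * x) by ring.
    pose proof (convex_lt y x (1 - t) ltac:(lra) ltac:(lra)). lra.
Qed.

End DerivativeOnHalfLine.

Lemma exp_le_compat u v : u <= v -> exp u <= exp v.
Proof. intros [Huv | ->]; [left; now apply exp_increasing | lra]. Qed.

Lemma exp_gt_1 x : 0 < x -> 1 < exp x.
Proof. intros Hx. rewrite <- exp_0. now apply exp_increasing. Qed.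

Lemma ln_gt_0 p : 1 < p -> 0 < ln p.
Proof. intros Hp. rewrite <- ln_1. apply ln_increasing; lra. Qed.

Lemma ln_le_compat p q : 0 < p -> p <= q -> ln p <= ln q.
Proof. intros Hp [Hpq | ->]; [left; now apply ln_increasing | lra]. Qed.

Lemma weighted_am_gm a u v : 0 < a < 1 -> 0 < u -> 0 < v ->
  Rpower u a * Rpower v (1 - a) <= a * u + (1 - a) * v.
Proof.
  intros Ha Hu Hv. unfold Rpower. rewrite <- exp_plus.
  rewrite <- (exp_ln u) at 2 by lra. rewrite <- (exp_ln v) at 2 by lra.
  set (lo := Rmin (ln u) (ln v) - 1).
  pose proof (Rmin_l (ln u) (ln v)). pose proof (Rmin_r (ln u) (ln v)).
  apply (convex exp exp lo (fun z _ => is_derive_exp z)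
           (fun z w _ Hzw => exp_le_compat z w Hzw)); unfold lo; lra.
Qed.

Definition tcot (t : R) : R := t * cos t / sin t.

Lemma is_derive_tcot t : 0 < t < PI ->
  is_derive tcot t ((cos t * sin t - t) / sin t ^ 2).
Proof.
  intros Ht. assert (0 < sin t) by (apply sin_gt_0; lra).
  unfold tcot. auto_derive; [lra|].
  assert (Hpyth : sin t ^ 2 + cos t ^ 2 = 1).
  { rewrite <- (sin2_cos2 t). unfold Rsqr. ring. }
  replace (cos t * sin t - t) with (cos t * sin t - t * (sin t ^ 2 + cos t ^ 2))
    by (rewrite Hpyth; ring).
  field. lra.
Qed.

Lemma tcot_antitone t1 t2 : 0 < t1 -> t1 <= t2 -> t2 < PI -> tcot t2 <= tcot t1.
Proof.
  intros H1 [H12 | <-] H2; [|lra].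
  (* [cos t sin t <= sin t < t] makes the derivative of [tcot] negative *)
  enough (- tcot t1 < - tcot t2) by lra.
  apply (incr_function (fun t => - tcot t) (Finite 0) (Finite PI)
           (fun t => - ((cos t * sin t - t) / sin t ^ 2))); cbn [Rbar_lt]; try lra.
  - intros t Ht0 HtPI. apply (is_derive_opp tcot). apply is_derive_tcot. lra.
  - intros t Ht0 HtPI.
    assert (0 < sin t) by (apply sin_gt_0; lra).
    assert (cos t * sin t <= sin t).
    { destruct (COS_bound t). rewrite <- (Rmult_1_l (sin t)) at 2.
      apply Rmult_le_compat_r; lra. }
    pose proof (sin_lt_x t Ht0).
    enough ((cos t * sin t - t) / sin t ^ 2 < 0) by lra.
    apply Rdiv_neg_pos; [lra | now apply pow_lt].
Qed.

Lemma tcot_le_1 t : 0 < t < PI -> tcot t <= 1.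
Proof.
  intros Ht. assert (0 < sin t) by (apply sin_gt_0; lra).
  destruct (mvt_above (fun u => sin u - u * cos u) (fun u => u * sin u) (-1)
              ltac:(intros; auto_derive; [easy | ring]) 0 t ltac:(lra))
    as [c [Hc E]].
  rewrite sin_0, cos_0 in E.
  assert (0 <= c * sin c * (t - 0)).
  { assert (0 <= sin c) by (apply sin_ge_0; lra). apply Rmult_le_pos; nra. }
  unfold tcot. apply Rmult_le_reg_r with (sin t); [lra|].
  field_simplify; lra.
Qed.

Definition log_pi_exp (x : R) : R := ln (pi_p (exp x)).
Definition dlog_pi_exp (x : R) : R := tcot (PI / exp x) - 1.

Lemma PI_div_bounds p : 1 < p -> 0 < PI / p < PI.
Proof.
  intros Hp. pose proof PI_RGT_0. split.
  - apply Rdiv_lt_0_compat; lra.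
  - apply Rmult_lt_reg_r with p; [lra|]. field_simplify; nra.
Qed.

Lemma pi_p_pos p : 1 < p -> 0 < pi_p p.
Proof.
  intros Hp. pose proof (PI_div_bounds p Hp). pose proof PI_RGT_0.
  assert (0 < sin (PI / p)) by (apply sin_gt_0; lra).
  unfold pi_p. apply Rdiv_lt_0_compat; [lra|]. apply Rmult_lt_0_compat; lra.
Qed.

Lemma ln_pi_p p : 1 < p -> ln (pi_p p) = log_pi_exp (ln p).
Proof. intros Hp. unfold log_pi_exp. rewrite exp_ln by lra. reflexivity. Qed.

Lemma is_derive_log_pi_exp x : 0 < x -> is_derive log_pi_exp x (dlog_pi_exp x).
Proof.
  intros Hx. pose proof (exp_gt_1 x Hx) as He.
  pose proof (PI_div_bounds _ He). pose proof (pi_p_pos _ He). pose proof PI_RGT_0.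
  assert (0 < sin (PI / exp x)) by (apply sin_gt_0; lra).
  unfold log_pi_exp, pi_p, dlog_pi_exp, tcot. auto_derive.
  - unfold pi_p in *. repeat split; try lra.
    apply Rgt_not_eq, Rmult_lt_0_compat; lra.
  - unfold Rdiv. field. repeat split; lra.
Qed.

Lemma dlog_pi_exp_monotone x y : 0 < x -> x <= y -> dlog_pi_exp x <= dlog_pi_exp y.
Proof.
  intros Hx Hxy. pose proof (exp_gt_1 x Hx) as Hex. pose proof (exp_le_compat x y Hxy).
  pose proof (PI_div_bounds _ Hex). pose proof (PI_div_bounds (exp y) ltac:(lra)).
  pose proof PI_RGT_0.
  unfold dlog_pi_exp.
  enough (tcot (PI / exp x) <= tcot (PI / exp y)) by lra.
  apply tcot_antitone; try lra.
  apply Rmult_le_compat_l; [lra|]. apply Rinv_le_contravar; lra.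
Qed.

Lemma dlog_pi_exp_nonpos x : 0 < x -> dlog_pi_exp x <= 0.
Proof.
  intros Hx. pose proof (tcot_le_1 _ (PI_div_bounds _ (exp_gt_1 x Hx))).
  unfold dlog_pi_exp. lra.
Qed.

Lemma log_pi_exp_antitone x y : 0 < x -> x <= y -> log_pi_exp y <= log_pi_exp x.
Proof.
  intros Hx [Hxy | <-]; [|lra].
  destruct (mvt_above log_pi_exp dlog_pi_exp 0 is_derive_log_pi_exp x y ltac:(lra))
    as [c [Hc E]].
  pose proof (dlog_pi_exp_nonpos c ltac:(lra)). nra.
Qed.

Lemma log_pi_exp_convex x y t : 0 < x -> 0 < y -> 0 < t < 1 ->
  log_pi_exp (t * x + (1 - t) * y) <= t * log_pi_exp x + (1 - t) * log_pi_exp y.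
Proof. exact (convex _ _ 0 is_derive_log_pi_exp dlog_pi_exp_monotone x y t). Qed.

Lemma log_pi_exp_scale k x y : 1 < k -> 0 < x <= y ->
  k * (log_pi_exp y - log_pi_exp x) <= log_pi_exp (k * y) - log_pi_exp (k * x).
Proof.
  intros Hk [Hx [Hxy | <-]]; [|lra].
  pose proof (slope_monotone _ _ 0 is_derive_log_pi_exp dlog_pi_exp_monotone
                x y (k * x) (k * y) Hx Hxy ltac:(nra) ltac:(nra) ltac:(nra)) as Hslope.
  unfold slope in Hslope.
  replace (k * y - k * x) with (k * (y - x)) in Hslope by ring.
  apply Rmult_le_compat_r with (r := k * (y - x)) in Hslope; [|nra].
  replace ((log_pi_exp y - log_pi_exp x) / (y - x) * (k * (y - x)))
    with (k * (log_pi_exp y - log_pi_exp x)) in Hslope by (field; lra).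
  replace ((log_pi_exp (k * y) - log_pi_exp (k * x)) / (k * (y - x)) * (k * (y - x)))
    with (log_pi_exp (k * y) - log_pi_exp (k * x)) in Hslope by (field; nra).
  exact Hslope.
Qed.

Lemma pi_p_antitone p q : 1 < p -> p <= q -> pi_p q <= pi_p p.
Proof.
  intros Hp Hpq.
  rewrite <- (exp_ln (pi_p q)), <- (exp_ln (pi_p p)) by (apply pi_p_pos; lra).
  rewrite !ln_pi_p by lra. apply exp_le_compat, log_pi_exp_antitone.
  - now apply ln_gt_0.
  - apply ln_le_compat; lra.
Qed.

Lemma pi_p_log_convex a r s : 0 < a < 1 -> 1 < r -> 1 < s ->
  pi_p (Rpower r a * Rpower s (1 - a)) <= Rpower (pi_p r) a * Rpower (pi_p s) (1 - a).
Proof.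
  intros Ha Hr Hs. pose proof (ln_gt_0 r Hr). pose proof (ln_gt_0 s Hs).
  assert (Hmean : Rpower r a * Rpower s (1 - a) = exp (a * ln r + (1 - a) * ln s)).
  { unfold Rpower. now rewrite exp_plus. }
  assert (Hgt1 : 1 < exp (a * ln r + (1 - a) * ln s)) by (apply exp_gt_1; nra).
  rewrite Hmean, <- (exp_ln (pi_p _)) by (now apply pi_p_pos).
  unfold Rpower. rewrite <- exp_plus, !ln_pi_p, ln_exp by lra.
  apply exp_le_compat, log_pi_exp_convex; lra.
Qed.

Lemma ln_pi_p_ratio p q : 1 < p -> 1 < q ->
  ln (pi_p q / pi_p p) = log_pi_exp (ln q) - log_pi_exp (ln p).
Proof.
  intros Hp Hq. pose proof (pi_p_pos p Hp). pose proof (pi_p_pos q Hq).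
  unfold Rdiv. rewrite ln_mult, ln_Rinv, !ln_pi_p by (try apply Rinv_0_lt_compat; lra).
  ring.
Qed.

Lemma Rpower_gt_1 p k : 1 < p -> 0 < k -> 1 < Rpower p k.
Proof. intros Hp Hk. apply exp_gt_1. pose proof (ln_gt_0 p Hp). nra. Qed.

Theorem lemma3p6 (a k r s : R) :
  0 < a < 1 -> 1 < k -> 1 < r -> 1 < s ->
  (pi_p (r * s) <= sqrt (pi_p (r ^ 2) * pi_p (s ^ 2))
   /\ sqrt (pi_p (r ^ 2) * pi_p (s ^ 2)) <= sqrt (pi_p r * pi_p s))
  /\ pi_p (Rpower r a * Rpower s (1 - a)) <= a * pi_p r + (1 - a) * pi_p s
  /\ (r <= s -> Rpower (pi_p s / pi_p r) k <= pi_p (Rpower s k) / pi_p (Rpower r k)).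
Proof.
  intros Ha Hk Hr Hs.
  assert (Hsq : forall p, 1 < p -> p <= p ^ 2) by (intros; nra).
  assert (Hhalf : forall p, 1 < p -> Rpower (p ^ 2) (/ 2) = p).
  { intros p Hp. rewrite Rpower_sqrt, sqrt_pow2; nra. }
  pose proof (pi_p_pos r Hr). pose proof (pi_p_pos s Hs).
  pose proof (pi_p_pos (r ^ 2) ltac:(nra)). pose proof (pi_p_pos (s ^ 2) ltac:(nra)).
  split; [split | split].
  - rewrite <- (Hhalf r), <- (Hhalf s) at 1 by lra.
    rewrite sqrt_mult, <- !Rpower_sqrt by lra.
    replace (/ 2) with (1 - / 2) at 2 4 by field.
    apply pi_p_log_convex; nra.
  - apply sqrt_le_1_alt, Rmult_le_compat; try lra; apply pi_p_antitone; auto.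
  - eapply Rle_trans; [apply pi_p_log_convex | apply weighted_am_gm]; lra.
  - intros Hrs.
    pose proof (Rpower_gt_1 r k Hr ltac:(lra)). pose proof (Rpower_gt_1 s k Hs ltac:(lra)).
    rewrite <- (exp_ln (_ / pi_p (Rpower r k))) by (apply Rdiv_lt_0_compat; apply pi_p_pos; lra).
    unfold Rpower at 1. apply exp_le_compat.
    rewrite !ln_pi_p_ratio, !ln_Rpower by lra.
    apply log_pi_exp_scale; [lra | split; [now apply ln_gt_0 | apply ln_le_compat; lra]].
Qed.
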